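(* Let $S_n(x)=(18n+24)\sin(x)-(9n+27)\sin((n+1)x)+9n\sin((n+2)x)+2\sin(4x)-\sin(5x)$. Let $n=3m$ with $m\geq 7$ an integer, and let $x\in(2\pi/3-1/n,\,2\pi/3)$. Then $$S_n''(x)=-(18n+24)\sin(x)+(9n+27)(n+1)^2\sin((n+1)x)-9n(n+2)^2\sin((n+2)x)-32\sin(4x)+25\sin(5x)>0.$$ *)

From Stdlib Require Import Reals.
From Coquelicot Require Import Coquelicot.
Open Scope R_scope.

Definition S (n : nat) (x : R) : R :=
  (18 * INR n + 24) * sin x
  - (9 * INR n + 27) * sin ((INR n + 1) * x)
  + 9 * INR n * sin ((INR n + 2) * x)
  + 2 * sin (4 * x) - sin (5 * x).

Definition S2 (n : nat) (x : R) : R :=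
  - (18 * INR n + 24) * sin x
  + (9 * INR n + 27) * (INR n + 1) ^ 2 * sin ((INR n + 1) * x)
  - 9 * INR n * (INR n + 2) ^ 2 * sin ((INR n + 2) * x)
  - 32 * sin (4 * x) + 25 * sin (5 * x).

From Stdlib Require Import Reals Lra Psatz.
From Coquelicot Require Import Coquelicot.
Open Scope R_scope.

(* For positivity, write N = 3m and x = 2π/3 - t with 0 < t < 1/N.  Since
   N is a multiple of 3, reducing modulo 2π gives
     sin((N+1)x) = sin(2π/3 - u),   sin((N+2)x) = - sin(π/3 - v),
   with u = (N+1)t, v = (N+2)t, both in (0, 1.1) because N >= 21.
   Expanding, the two large coefficients multiply √3/2·cos u + sin u/2 and
   √3/2·cos v - sin v/2.  On (0, 1.1) we have cos >= 2/5 (from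
   cos w >= 1 - w²/2) and sin > 0, and √3/2 >= 0.86; the terms of order N³
   then dominate the remaining bounded terms, which is an elementary
   polynomial inequality in N proved last before the theorem. *)

Definition S1 (n : nat) (x : R) : R :=
  (18 * INR n + 24) * cos x
  - (9 * INR n + 27) * (INR n + 1) * cos ((INR n + 1) * x)
  + 9 * INR n * (INR n + 2) * cos ((INR n + 2) * x)
  + 8 * cos (4 * x) - 5 * cos (5 * x).

Lemma S_derive (n : nat) (x : R) : is_derive (S n) x (S1 n x).
Proof. unfold S, S1. auto_derive; auto. ring. Qed.

Lemma S1_derive (n : nat) (x : R) : is_derive (S1 n) x (S2 n x).
Proof. unfold S1, S2. auto_derive; auto. ring. Qed.

Lemma S_second_derivative (n : nat) (x : R) : is_derive_n (S n) 2 x (S2 n x).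
Proof.
  simpl. apply is_derive_ext with (S1 n).
  - intro y. symmetry. apply is_derive_unique, S_derive.
  - apply S1_derive.
Qed.

(* Quadratic lower bound cos w >= 1 - w²/2, via cos w = 1 - 2 sin²(w/2)
   and 0 < sin(w/2) < w/2. *)
Lemma cos_ge_quadratic (w : R) : 0 < w < 4 -> 1 - w * w / 2 <= cos w.
Proof.
  intros Hw.
  replace (cos w) with (cos (2 * (w / 2))) by (f_equal; field).
  rewrite cos_2a_sin.
  pose proof (sin_lt_x (w / 2) ltac:(lra)) as Hlt.
  pose proof (sin_pos_tech (w / 2) ltac:(lra)) as Hpos.
  nra.
Qed.

Lemma cos_sin_small_arg (w : R) : 0 < w < 1 + 2 / 21 -> 2 / 5 <= cos w /\ 0 < sin w.
Proof.
  intros Hw. split.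
  - pose proof (cos_ge_quadratic w ltac:(lra)). nra.
  - apply sin_pos_tech. lra.
Qed.

Lemma sqrt3_half_lower : 43 / 50 <= sqrt 3 / 2.
Proof.
  assert (1.72 <= sqrt 3).
  { rewrite <- (sqrt_pow2 1.72) by lra. apply sqrt_le_1_alt. lra. }
  lra.
Qed.

Lemma sin_shift_near_2PI3 (m : nat) (t : R) :
  let N := INR (3 * m) in
  sin ((N + 1) * (2 * (PI / 3) - t)) = sin (2 * (PI / 3) - (N + 1) * t) /\
  sin ((N + 2) * (2 * (PI / 3) - t)) = - sin (PI / 3 - (N + 2) * t).
Proof.
  intros N.
  assert (HN : N = 3 * INR m) by (unfold N; rewrite mult_INR; simpl; ring).
  split.
  - replace ((N + 1) * (2 * (PI / 3) - t))
      with (2 * (PI / 3) - (N + 1) * t + 2 * INR m * PI) by (rewrite HN; field).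
    apply sin_period.
  - replace ((N + 2) * (2 * (PI / 3) - t))
      with (PI / 3 - (N + 2) * t + PI + 2 * INR m * PI) by (rewrite HN; field).
    rewrite sin_period. apply neg_sin.
Qed.

(* The final estimate, with all trigonometric quantities replaced by the
   bounds established above: the N³ terms dominate once N >= 21. *)
Lemma main_estimate (N r cu su cv sv a b c : R) :
  21 <= N -> 43 / 50 <= r ->
  2 / 5 <= cu -> 0 <= su -> 2 / 5 <= cv -> sv <= 1 ->
  -1 <= a <= 1 -> -1 <= b <= 1 -> -1 <= c <= 1 ->
  0 < - (18 * N + 24) * a
      + (9 * N + 27) * (N + 1) ^ 2 * (r * cu + su / 2)
      + 9 * N * (N + 2) ^ 2 * (r * cv - sv / 2)
      - 32 * b + 25 * c.
Proof.
  intros HN Hr Hcu Hsu Hcv Hsv Ha Hb Hc.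
  set (P := (9 * N + 27) * (N + 1) ^ 2).
  set (Q := 9 * N * (N + 2) ^ 2).
  assert (HQ : 9 * N * N * N <= Q) by (unfold Q; nra).
  assert (HPQ : Q <= P) by (unfold P, Q; nra).
  assert (HQ0 : 0 <= Q) by (unfold Q; apply Rmult_le_pos; nra).
  assert (Hrcu : 43 / 50 * (2 / 5) <= r * cu) by nra.
  assert (Hrcv : 43 / 50 * (2 / 5) <= r * cv) by nra.
  assert (A1 : P * (43 / 50 * (2 / 5)) <= P * (r * cu + su / 2))
    by (apply Rmult_le_compat_l; lra).
  assert (A2 : Q * (43 / 50 * (2 / 5) - 1 / 2) <= Q * (r * cv - sv / 2))
    by (apply Rmult_le_compat_l; lra).
  nra.
Qed.

Theorem lemma6 (m : nat) (x : R) :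
  (7 <= m)%nat ->
  2 * PI / 3 - 1 / INR (3 * m) < x < 2 * PI / 3 ->
  is_derive_n (S (3 * m)) 2 x (S2 (3 * m) x) /\ 0 < S2 (3 * m) x.
Proof.
  intros Hm Hx. split; [apply S_second_derivative|].
  replace (2 * PI / 3) with (2 * (PI / 3)) in Hx by field.
  set (N := INR (3 * m)) in *.
  assert (HN : 21 <= N).
  { replace 21 with (INR 21) by (simpl; ring). apply le_INR. lia. }
  set (t := 2 * (PI / 3) - x).
  assert (Ht : 0 < t < 1 / N) by (unfold t; lra).
  assert (HNt : N * t < 1).
  { destruct Ht as [_ Ht]. apply (Rmult_lt_compat_l N) in Ht; [|lra].
    replace (N * (1 / N)) with 1 in Ht by (field; lra). exact Ht. }
  replace x with (2 * (PI / 3) - t) by (unfold t; ring).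
  destruct (sin_shift_near_2PI3 m t) as [E1 E2]. fold N in E1, E2.
  rewrite sin_minus, sin_2PI3, cos_2PI3 in E1.
  rewrite sin_minus, sin_PI3, cos_PI3 in E2.
  unfold S2. fold N. rewrite E1, E2.
  destruct (cos_sin_small_arg ((N + 1) * t)) as [Cu Su]; [nra|].
  destruct (cos_sin_small_arg ((N + 2) * t)) as [Cv _]; [nra|].
  pose proof (main_estimate N (sqrt 3 / 2) (cos ((N + 1) * t)) (sin ((N + 1) * t))
                (cos ((N + 2) * t)) (sin ((N + 2) * t)) (sin (2 * (PI / 3) - t))
                (sin (4 * (2 * (PI / 3) - t))) (sin (5 * (2 * (PI / 3) - t)))
                HN sqrt3_half_lower Cu (Rlt_le _ _ Su) Cv
                (proj2 (SIN_bound _)) (SIN_bound _) (SIN_bound _) (SIN_bound _)).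
  lra.
Qed.
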